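(* Let $G$ be a finite group acting (faithfully) on a finite set $M$ via $\circ$, and let $\mathcal H$ be a family of subgroups of $G$. Suppose $f:M\to S$ hides some $H\in\mathcal H$ by symmetries, i.e. $f(x)=f(y)\iff H\circ x=H\circ y$ for all $x,y\in M$. Let $B=\{m_1,\dots,m_t\}\subseteq M$ be an $\mathcal H$-strong base. Then the function $f_{\rm HSP}:G\to S^t$, $f_{\rm HSP}(g)=(f(g\circ m_1),\dots,f(g\circ m_t))$, hides $H$ in the sense of the hidden subgroup problem: for all $x,y\in G$, $f_{\rm HSP}(x)=f_{\rm HSP}(y)\iff Hx=Hy$.
   Context: For $m\in M$, $G_m=\{g\in G: g\circ m=m\}$ is the stabilizer of $m$. For $H\le G$, a set $B\subseteq M$ is an $H$-strong base if for every $g\in G$, $\bigcap_{m\in B} H\,G_{g\circ m}=H$ (here $HG_{m}=\{hk:h\in H,k\in G_m\}$). $B$ is an $\mathcal H$-strong base if it is an $H$-strong base for every $H\in\mathcal H$. *)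

From mathcomp Require Import all_boot all_fingroup.
Set Implicit Arguments. Unset Strict Implicit. Unset Printing Implicit Defensive.
Local Open Scope group_scope.

Section Defs.
Variables (gT : finGroupType) (M : finType) (act : gT -> M -> M).

Definition stab (m : M) : {set gT} := [set g : gT | act g m == m].

Definition horbit (H : {set gT}) (x : M) : {set M} := [set act h x | h in H].

Definition strong_base (H : {set gT}) (B : {set M}) : Prop :=
  forall g : gT, \bigcap_(m in B) (H * stab (act g m)) = H.

Definition family_strong_base (calH : {set {group gT}}) (B : {set M}) : Prop :=
  forall H : {group gT}, H \in calH -> strong_base H B.

Definition hides_by_symmetries (S : Type) (H : {set gT}) (f : M -> S) : Prop :=
  forall x y : M, f x = f y <-> horbit H x = horbit H y.
End Defs.

From mathcomp Require Import all_boot all_fingroup.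
Set Implicit Arguments. Unset Strict Implicit. Unset Printing Implicit Defensive.
Local Open Scope group_scope.

(* For an action of G on M and a subgroup H, two points x and y
   of M have the same H-orbit iff y = h o x for some h in H.  Applied to the
   points g o m this gives, for group elements x and y:
   - if H x = H y then H o (x o m) = H o (y o m) for every m, since
     x = (x y^-1) y with x y^-1 in H;
   - if H o (x o m) = H o (y o m) then x y^-1 lies in H G_{y o m}: writing
     y o m = h o (x o m), the element h x y^-1 fixes y o m.
   When B is an H-strong base, the intersection over m in B of the sets
   H G_{y o m} is exactly H, so equality of all the orbits H o (x o m),
   m in B, forces x y^-1 in H, i.e. H x = H y  (lemma [strong_base_orbitsP]).
   The theorem is this equivalence composed with the hypothesis that f
   separates exactly the H-orbits. *)

Section OrbitsOfTranslates.

Variables (gT : finGroupType) (M : finType) (act : gT -> M -> M).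
Hypothesis act1 : forall m : M, act 1 m = m.
Hypothesis actM : forall (g h : gT) (m : M), act (g * h) m = act g (act h m).
Variable H : {group gT}.

Lemma horbit_refl (z : M) : z \in horbit act H z.
Proof. by apply/imsetP; exists 1; rewrite ?group1 ?act1. Qed.

Lemma horbit_act (h : gT) (z : M) :
  h \in H -> horbit act H (act h z) = horbit act H z.
Proof.
move=> hH; apply/setP=> w; apply/imsetP/imsetP => [[k kH ->]|[k kH ->]].
  by exists (k * h); rewrite ?groupM ?actM.
by exists (k * h^-1); rewrite ?groupM ?groupV // -actM mulgKV.
Qed.

Lemma horbit_eq_mulg_stab (x y : gT) (m : M) :
  horbit act H (act x m) = horbit act H (act y m) ->
  x * y^-1 \in H * stab act (act y m).
Proof.
move=> orbit_eq.
have /imsetP[h hH yxm] : act y m \in horbit act H (act x m).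
  by rewrite orbit_eq horbit_refl.
have -> : x * y^-1 = h^-1 * (h * x * y^-1) by rewrite -!mulgA mulKg.
apply: mem_mulg; first by rewrite groupV.
by rewrite inE !actM -(actM y^-1) mulVg act1 -yxm.
Qed.

Lemma strong_base_orbitsP (B : {set M}) (x y : gT) :
  strong_base act H B ->
  (forall m, m \in B -> horbit act H (act x m) = horbit act H (act y m)) <->
  H :* x = H :* y.
Proof.
move=> hB; split=> [orbits_eq | coset_eq m _].
  apply/rcoset_eqP; rewrite mem_rcoset -(hB y).
  by apply/bigcapP=> m mB; apply: horbit_eq_mulg_stab; apply: orbits_eq.
have : x \in H :* y by rewrite -coset_eq rcoset_refl.
rewrite mem_rcoset => xyH.
by rewrite -{1}(mulgKV y x) actM horbit_act.
Qed.

End OrbitsOfTranslates.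

Theorem lemma1 (gT : finGroupType) (M : finType) (act : gT -> M -> M)
  (act1 : forall m : M, act 1 m = m)
  (actM : forall (g h : gT) (m : M), act (g * h) m = act g (act h m))
  (faithful : forall g : gT, (forall m : M, act g m = m) -> g = 1)
  (calH : {set {group gT}}) (H : {group gT}) (HcalH : H \in calH)
  (S : Type) (f : M -> S) (hf : hides_by_symmetries act H f)
  (ms : seq M) (hB : family_strong_base act calH [set m in ms]) :
  forall x y : gT,
    [seq f (act x m) | m <- ms] = [seq f (act y m) | m <- ms] <->
    H :* x = H :* y.
Proof.
move=> x y.
apply: iff_trans (strong_base_orbitsP act1 actM x y (hB H HcalH)).
split=> [/eq_in_map f_eq m | orbits_eq].
- by rewrite inE => mms; apply/hf/f_eq.
- by apply/eq_in_map=> m mms; apply/hf/orbits_eq; rewrite inE.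
Qed.
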